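(* Every object $M$ of $\bar{\mathcal{O}}$ is a direct sum of indecomposable objects of $\bar{\mathcal{O}}$.
   Context: $\mathbb{K}$ is an algebraically closed field of characteristic $0$. $\mathfrak{g}=\bigcup_{n\ge1}\mathfrak{g}_n$ is a root-reductive Lie algebra (nested finite-dimensional reductive Lie algebras with nested Cartan subalgebras, each inclusion $\mathfrak{g}_n\hookrightarrow\mathfrak{g}_{n+1}$ a root inclusion). $\mathfrak{h}$ is a splitting maximal toral subalgebra ($\mathfrak{h}\cap\mathfrak{g}_n$ maximal toral in $\mathfrak{g}_n$, $\mathfrak{g}=\mathfrak{h}\oplus\bigoplus_{\alpha\in\Delta}\mathfrak{g}^\alpha$). $\mathfrak{b}=\mathfrak{h}\oplus\mathfrak{n}$, $\mathfrak{n}=\bigoplus_{\alpha\in\Delta^+}\mathfrak{g}^\alpha$, is a splitting Borel subalgebra given by positive roots $\Delta^+$, assumed Dynkin (generated by $\mathfrak{h}$ and the simple root spaces). The extended category $\mathcal{O}$, denoted $\bar{\mathcal{O}}$, is the full subcategory of $\mathfrak{g}$-modules $M$ such that $M$ is an $\mathfrak{h}$-weight module (semisimple over $\mathfrak{h}$) with finite-dimensional weight spaces and $M$ is locally $\mathfrak{n}$-finite ($U(\mathfrak{n})\cdot v$ finite-dimensional for all $v\in M$). *)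

From HB Require Import structures.
From mathcomp Require Import all_boot all_order all_algebra.
Set Implicit Arguments. Unset Strict Implicit. Unset Printing Implicit Defensive.
Import GRing.Theory.
Local Open Scope ring_scope.

Section LinAlg.
Variables (K : fieldType) (M : lmodType K).

Definition span (S : M -> Prop) : M -> Prop := fun x =>
  exists n (v : 'I_n -> M) (c : 'I_n -> K),
    (forall i, S (v i)) /\ x = \sum_(i < n) c i *: v i.

Definition subspace (S : M -> Prop) : Prop :=
  S 0 /\ forall (a : K) x y, S x -> S y -> S (a *: x + y).

Definition fin_dim (S : M -> Prop) : Prop :=
  exists n (b : 'I_n -> M), forall x, S x <-> span (fun y => exists i, y = b i) x.

Definition subset_of (A B : M -> Prop) : Prop := forall x, A x -> B x.

Definition direct_sum2 (N N1 N2 : M -> Prop) : Prop :=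
  [/\ subset_of N1 N, subset_of N2 N,
      (forall v, N v -> exists v1 v2, [/\ N1 v1, N2 v2 & v = v1 + v2]) &
      (forall v, N1 v -> N2 v -> v = 0)].

Definition direct_sum_family (I : Type) (Ns : I -> M -> Prop) : Prop :=
  (forall v : M, exists k (f : 'I_k -> I) (w : 'I_k -> M),
      (forall j, Ns (f j) (w j)) /\ v = \sum_(j < k) w j) /\
  (forall k (f : 'I_k -> I) (w : 'I_k -> M), injective f ->
      (forall j, Ns (f j) (w j)) -> \sum_(j < k) w j = 0 -> forall j, w j = 0).

End LinAlg.

Section Lie.
Variables (K : fieldType) (L : lmodType K) (br : L -> L -> L).

Definition lie_bracket : Prop :=
  [/\ forall (a : K) x y z, br (a *: x + y) z = a *: br x z + br y z,
      forall (a : K) x y z, br z (a *: x + y) = a *: br z x + br z y,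
      forall x, br x x = 0 &
      forall x y z, br x (br y z) + br y (br z x) + br z (br x y) = 0].

Definition subalgebra (S : L -> Prop) : Prop :=
  subspace S /\ forall x y, S x -> S y -> S (br x y).

Definition ideal_of (S I : L -> Prop) : Prop :=
  [/\ subspace I, subset_of I S & forall x y, S x -> I y -> I (br x y)].

Definition brsp (A B : L -> Prop) : L -> Prop :=
  span (fun z => exists x y, [/\ A x, B y & z = br x y]).

Fixpoint derived (I : L -> Prop) (k : nat) : L -> Prop :=
  if k is k'.+1 then brsp (derived I k') (derived I k') else I.

Fixpoint lcs (S : L -> Prop) (k : nat) : L -> Prop :=
  if k is k'.+1 then brsp S (lcs S k') else S.

Definition solvable_sp (I : L -> Prop) : Prop :=
  exists k, forall x, derived I k x -> x = 0.

Definition nilpotent_sp (S : L -> Prop) : Prop :=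
  exists k, forall x, lcs S k x -> x = 0.

Definition center_of (S : L -> Prop) : L -> Prop :=
  fun x => S x /\ forall y, S y -> br x y = 0.

(* finite-dimensional reductive Lie subalgebra: radical = center, i.e.
   every solvable ideal lies in the center *)
Definition reductive (S : L -> Prop) : Prop :=
  [/\ subalgebra S, fin_dim S &
      forall I, ideal_of S I -> solvable_sp I -> subset_of I (center_of S)].

Definition cartan_of (S H : L -> Prop) : Prop :=
  [/\ subalgebra H, subset_of H S, nilpotent_sp H &
      forall x, S x -> (forall y, H y -> H (br x y)) -> H x].

(* functionals on H (represented by functions L -> K linear on H) *)
Definition linear_on (H : L -> Prop) (lam : L -> K) : Prop :=
  forall (a : K) x y, H x -> H y -> lam (a *: x + y) = a * lam x + lam y.

Definition eq_on (H : L -> Prop) (lam mu : L -> K) : Prop :=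
  forall x, H x -> lam x = mu x.

Definition rootsp (S H : L -> Prop) (lam : L -> K) : L -> Prop :=
  fun x => S x /\ forall h, H h -> br h x = lam h *: x.

Definition is_root (S H : L -> Prop) (lam : L -> K) : Prop :=
  [/\ linear_on H lam, exists h, H h /\ lam h != 0 &
      exists x, rootsp S H lam x /\ x != 0].

Definition root_inclusion (S H S' H' : L -> Prop) : Prop :=
  [/\ subset_of S S', subset_of H H' &
      forall alpha, is_root S H alpha ->
        exists beta, is_root S' H' beta /\
          subset_of (rootsp S H alpha) (rootsp S' H' beta)].

Definition ad_semisimple (S : L -> Prop) (x : L) : Prop :=
  forall y, S y -> span (fun z => S z /\ exists c : K, br x z = c *: z) y.

Definition toral_of (S T : L -> Prop) : Prop :=
  [/\ subalgebra T, subset_of T S & forall x, T x -> ad_semisimple S x].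

Definition max_toral_of (S T : L -> Prop) : Prop :=
  toral_of S T /\
  forall T', toral_of S T' -> subset_of T T' -> subset_of T' T.

Definition wholeL : L -> Prop := fun _ => True.

Definition root_reductive (gs Hs : nat -> L -> Prop) : Prop :=
  [/\ lie_bracket,
      forall n, reductive (gs n),
      forall n, cartan_of (gs n) (Hs n),
      forall n, root_inclusion (gs n) (Hs n) (gs n.+1) (Hs n.+1) &
      forall x, exists n, gs n x].

Definition groot (h : L -> Prop) (alpha : L -> K) : Prop :=
  is_root wholeL h alpha.

Definition splitting_max_toral (gs : nat -> L -> Prop) (h : L -> Prop) : Prop :=
  [/\ subalgebra h,
      forall n, max_toral_of (gs n) (fun x => h x /\ gs n x) &
      forall x, span (fun y => h y \/ exists alpha, groot h alpha /\
                                     rootsp wholeL h alpha y) x].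

Definition positive_system (h : L -> Prop) (P : (L -> K) -> Prop) : Prop :=
  [/\ forall a b, eq_on h a b -> P a -> P b,
      forall a, P a -> groot h a,
      forall a, groot h a -> (P a \/ P (fun x => - a x)) /\
                             ~ (P a /\ P (fun x => - a x)) &
      forall a b, P a -> P b -> groot h (fun x => a x + b x) ->
                  P (fun x => a x + b x)].

Definition nilrad (h : L -> Prop) (P : (L -> K) -> Prop) : L -> Prop :=
  span (fun y => exists alpha, P alpha /\ rootsp wholeL h alpha y).

Definition borel (h : L -> Prop) (P : (L -> K) -> Prop) : L -> Prop :=
  span (fun y => h y \/ nilrad h P y).

Definition simple_root (h : L -> Prop) (P : (L -> K) -> Prop) (a : L -> K) :=
  P a /\ ~ exists b c, [/\ P b, P c & eq_on h a (fun x => b x + c x)].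

Definition gen_subalg (A : L -> Prop) : L -> Prop :=
  fun x => forall S, subalgebra S -> subset_of A S -> S x.

Definition dynkin (h : L -> Prop) (P : (L -> K) -> Prop) : Prop :=
  subset_of (borel h P)
    (gen_subalg (fun y => h y \/ exists a, simple_root h P a /\
                                    rootsp wholeL h a y)).

Section Modules.
Variables (V : lmodType K) (act : L -> V -> V).

Definition lie_module : Prop :=
  [/\ forall (a : K) x y v, act (a *: x + y) v = a *: act x v + act y v,
      forall (a : K) x v w, act x (a *: v + w) = a *: act x v + act x w &
      forall x y v, act (br x y) v = act x (act y v) - act y (act x v)].

Definition weight_space (h : L -> Prop) (lam : L -> K) : V -> Prop :=
  fun v => forall t, h t -> act t v = lam t *: v.

(* U(n) . v : smallest subspace containing v and stable under n *)
Definition Un_orbit (n : L -> Prop) (v : V) : V -> Prop :=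
  fun w => forall S, subspace S -> S v ->
             (forall x u, n x -> S u -> S (act x u)) -> S w.

Definition in_Obar (h : L -> Prop) (P : (L -> K) -> Prop) : Prop :=
  [/\
      forall v, span (fun w => exists lam, linear_on h lam /\
                                 weight_space h lam w) v,
      forall lam, linear_on h lam -> fin_dim (weight_space h lam) &
      forall v, fin_dim (Un_orbit (nilrad h P) v)].

Definition submodule (N : V -> Prop) : Prop :=
  subspace N /\ forall x v, N v -> N (act x v).

Definition indecomposable (N : V -> Prop) : Prop :=
  [/\ submodule N, exists v, N v /\ v != 0 &
      ~ exists N1 N2, [/\ submodule N1, submodule N2,
                          exists v, N1 v /\ v != 0,
                          exists v, N2 v /\ v != 0 &
                          direct_sum2 N N1 N2]].

End Modules.
End Lie.

From Pilot Require Import Defs.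
From HB Require Import structures.
From mathcomp Require Import all_boot all_order all_algebra.
From mathcomp Require Import boolp classical_sets.
Set Implicit Arguments. Unset Strict Implicit. Unset Printing Implicit Defensive.
Import GRing.Theory.
Local Open Scope ring_scope.

(* Only two properties of a module M of the extended category O are used: M is
   spanned by weight vectors and its weight spaces are finite-dimensional.

   Call a decomposition of M a family of nonzero submodules of which M is the
   internal direct sum, ordered by refinement. In a maximal decomposition every
   piece is indecomposable, since splitting a piece would refine it, so by
   Zorn's lemma it suffices to bound a chain C of decompositions. A vector is
   pure if it lies in a piece of every member of C; intersecting, for each
   nonzero pure w, all pieces containing w gives a decomposition refining C.
   Its pieces are independent because finitely many of them are already told
   apart by a single member of C. They span because of the weight spaces: the
   components of a weight vector are linearly independent vectors of its weight
   space, so their number is bounded along C, and where it is largest they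
   cannot split any further, i.e. they are pure. *)

Section ModuleDecompositions.
Variables (K : fieldType) (L V : lmodType K) (act : L -> V -> V).
Hypothesis act_linear :
  forall (a : K) x v w, act x (a *: v + w) = a *: act x v + act x w.

Local Notation space := (V -> Prop).

Lemma act0 x : act x 0 = 0.
Proof.
have := act_linear 1 x 0 0; rewrite !scale1r !addr0 => H.
by apply: (addrI (act x 0)); rewrite addr0 -H.
Qed.

Lemma actD x v w : act x (v + w) = act x v + act x w.
Proof. by have := act_linear 1 x v w; rewrite !scale1r. Qed.

Lemma actZ x a v : act x (a *: v) = a *: act x v.
Proof. by have := act_linear a x v 0; rewrite !addr0 act0 addr0. Qed.

Lemma act_sum x (I : Type) (r : seq I) (P : pred I) (F : I -> V) :
  act x (\sum_(i <- r | P i) F i) = \sum_(i <- r | P i) act x (F i).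
Proof. exact: (big_morph _ (actD x) (act0 x)). Qed.

Lemma subspace0 (N : space) : subspace N -> N 0.
Proof. by case. Qed.

Lemma subspaceD (N : space) x y : subspace N -> N x -> N y -> N (x + y).
Proof. by case=> _ N_lin Nx Ny; have := N_lin 1 _ _ Nx Ny; rewrite scale1r. Qed.

Lemma subspaceZ (N : space) a x : subspace N -> N x -> N (a *: x).
Proof. by case=> N0 N_lin Nx; have := N_lin a _ _ Nx N0; rewrite addr0. Qed.

Lemma subspaceN (N : space) x : subspace N -> N x -> N (- x).
Proof. by move=> N_sub Nx; rewrite -scaleN1r; apply: subspaceZ. Qed.

Lemma subspace_sum (N : space) (I : Type) (r : seq I) (P : pred I) (F : I -> V) :
  subspace N -> (forall i, P i -> N (F i)) -> N (\sum_(i <- r | P i) F i).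
Proof.
move=> N_sub NF; apply: (big_ind N) => //; first exact: subspace0.
by move=> x y; apply: subspaceD.
Qed.

Lemma weight_spaceZ h lam a v :
  weight_space act h lam v -> weight_space act h lam (a *: v).
Proof. by move=> wv t ht; rewrite actZ wv // !scalerA mulrC. Qed.

(* A list of pairs [(N, v)] stands for the formal sum of the vectors [v], each
   labelled by a piece [N] containing it; labels may repeat. *)
Definition labelled (D : space -> Prop) (s : seq (space * V)) :=
  {in s, forall p, D p.1 /\ p.1 p.2}.

Definition total (s : seq (space * V)) := \sum_(p <- s) p.2.

Definition component (s : seq (space * V)) (N : space) :=
  \sum_(p <- s | p.1 == N) p.2.

Definition nonzero_submodule (N : space) :=
  submodule act N /\ exists v, N v /\ v != 0.

Definition decomposition (D : space -> Prop) :=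
  [/\ forall N, D N -> nonzero_submodule N,
      forall v, exists2 s, labelled D s & v = total s &
      forall s, labelled D s -> total s = 0 -> forall N, component s N = 0].

Definition refined_by (D D' : space -> Prop) :=
  forall N', D' N' -> exists2 N, D N & subset_of N' N.

Definition expansion (D : space -> Prop) (w : V) (s : seq (space * V)) :=
  [/\ labelled D s, uniq (unzip1 s), {in s, forall p, p.2 != 0} & total s = w].

Lemma labelled_cat D s1 s2 :
  labelled D (s1 ++ s2) <-> labelled D s1 /\ labelled D s2.
Proof.
split=> [Ds | [Ds1 Ds2] p]; first by split=> p ps; apply: Ds; rewrite mem_cat ps ?orbT.
by rewrite mem_cat => /orP[/Ds1 | /Ds2].
Qed.

Lemma labelled_map D (T : eqType) (s : seq T) (g : T -> space * V) :
  {in s, forall x, D (g x).1 /\ (g x).1 (g x).2} -> labelled D (map g s).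
Proof. by move=> Dg p /mapP[x xs ->]; apply: Dg. Qed.

Lemma total_cat s1 s2 : total (s1 ++ s2) = total s1 + total s2.
Proof. exact: big_cat. Qed.

Lemma labelled_sum D (I : Type) (r : seq I) (P : pred I) (F : I -> V) :
  (forall i, P i -> exists2 s, labelled D s & F i = total s) ->
  exists2 s, labelled D s & \sum_(i <- r | P i) F i = total s.
Proof.
move=> DF; apply: (big_ind (fun x => exists2 s, labelled D s & x = total s)).
- by exists [::] => [p | ]; rewrite ?in_nil // /total big_nil.
- move=> _ _ [s1 Ds1 ->] [s2 Ds2 ->].
  by exists (s1 ++ s2); [apply/labelled_cat | rewrite total_cat].
- exact: DF.
Qed.

Lemma component_in D s M : labelled D s -> subspace M -> M (component s M).
Proof.
move=> Ds M_sub; rewrite /component big_seq_cond.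
by apply: subspace_sum M_sub _ => p /andP[ps /eqP <-]; case: (Ds p ps).
Qed.

Lemma component_notin s N : N \notin unzip1 s -> component s N = 0.
Proof.
move=> Ns; rewrite /component big1_seq // => p /andP[/eqP pN ps].
by move: Ns; rewrite -pN (map_f fst ps).
Qed.

Lemma component_uniq s p : uniq (unzip1 s) -> p \in s -> component s p.1 = p.2.
Proof.
elim: s => // q s IHs /= /andP[qs us]; rewrite inE /component big_cons.
case/orP=> [/eqP -> | ps]; last first.
  rewrite ifN -/(component s p.1) ?IHs //.
  by apply: contraNneq qs => ->; apply: map_f.
by rewrite eqxx -/(component s q.1) component_notin ?addr0.
Qed.

Lemma total_components s :
  \sum_(N <- undup (unzip1 s)) component s N = total s.
Proof.
rewrite /component /total.
under eq_bigr do rewrite big_mkcond.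
rewrite exchange_big [RHS]big_seq big_seq; apply: eq_bigr => p ps.
rewrite -big_mkcond -big_filter (eq_filter (a2 := pred1 p.1)) => [|N]; last first.
  by rewrite /= eq_sym.
by rewrite filter_pred1_uniq ?undup_uniq ?mem_undup ?big_seq1 // map_f.
Qed.

Lemma component_relabel (f : space -> space) s N :
  {in unzip1 s &, injective f} -> N \in unzip1 s ->
  component [seq (f p.1, p.2) | p <- s] (f N) = component s N.
Proof.
move=> f_inj Ns; rewrite /component big_map big_seq_cond [RHS]big_seq_cond.
apply: eq_bigl => p; case: (boolP (p \in s)) => //= ps.
by rewrite (inj_in_eq f_inj) // map_f.
Qed.

Section Decomposition.
Variables (D : space -> Prop) (dD : decomposition D).

Lemma decomposition_submodule N : D N -> submodule act N.
Proof. by case: dD => nzD _ _ /nzD[]. Qed.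

Lemma decomposition_subspace N : D N -> subspace N.
Proof. by case/decomposition_submodule. Qed.

Lemma component_eq s t N : labelled D s -> labelled D t -> total s = total t ->
  component s N = component t N.
Proof.
move=> Ds Dt st; pose u := s ++ [seq (p.1, - p.2) | p <- t].
have Du : labelled D u.
  apply/labelled_cat; split=> //; apply: labelled_map => p /Dt[Dp pp] /=.
  by split=> //; apply: subspaceN (decomposition_subspace Dp) pp.
have u0 : total u = 0 by rewrite total_cat st /total big_map sumrN subrr.
case: dD => _ _ /(_ u Du u0 N) /eqP.
by rewrite /component big_cat big_map sumrN subr_eq0 => /eqP.
Qed.

Lemma piece_unique M N x : D M -> D N -> M x -> N x -> x != 0 -> M = N.
Proof.
move=> DM DN Mx Nx x0; apply/eqP; apply: contraNT x0 => MN.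
have := @component_eq [:: (M, x)] [:: (N, x)] M.
rewrite /component !big_cons !big_nil /= eqxx eq_sym (negbTE MN) addr0 => -> //.
- by move=> p; rewrite inE => /eqP ->.
- by move=> p; rewrite inE => /eqP ->.
- by rewrite /total !big_seq1.
Qed.

Lemma expansion_entry w s t p : expansion D w s -> labelled D t -> total t = w ->
  p \in s -> p.2 = component t p.1.
Proof.
case=> Ds us _ sw Dt tw ps; rewrite -(component_uniq us ps).
by apply: component_eq; rewrite ?sw.
Qed.

Lemma total_eq0_uniq s : labelled D s -> uniq (unzip1 s) -> total s = 0 ->
  {in s, forall p, p.2 = 0}.
Proof.
move=> Ds us s0 p ps; rewrite -(component_uniq us ps).
by case: dD => _ _ /(_ s Ds s0).
Qed.

Lemma exists_expansion v : exists s, expansion D v s.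
Proof.
case: (dD) => _ /(_ v)[s Ds ->] _.
pose s1 := [seq (N, component s N) | N <- undup (unzip1 s)].
exists [seq p <- s1 | p.2 != 0]; split.
- move=> p; rewrite mem_filter => /andP[_ /mapP[N]].
  rewrite mem_undup => /mapP[q qs ->] -> /=; have [Dq _] := Ds q qs.
  by split=> //; apply: component_in Ds (decomposition_subspace Dq).
- apply: subseq_uniq (map_subseq _ (filter_subseq _ _)) _.
  by rewrite /s1 /unzip1 -map_comp map_id undup_uniq.
- by move=> p; rewrite mem_filter => /andP[].
- rewrite -(total_components s) {1}/total big_filter big_map.
  by rewrite big_mkcond; apply: eq_bigr => N _ /=; case: eqP.
Qed.

Lemma component_weight h lam s N : labelled D s ->
  weight_space act h lam (total s) -> weight_space act h lam (component s N).
Proof.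
move=> Ds ws t ht.
have Dmap (f : V -> V) : (forall M x, D M -> M x -> M (f x)) ->
    labelled D [seq (p.1, f p.2) | p <- s].
  by move=> fD; apply: labelled_map => p /Ds[Dp pp]; split=> //; apply: fD.
have := @component_eq [seq (p.1, act t p.2) | p <- s]
  [seq (p.1, lam t *: p.2) | p <- s] N.
rewrite /component !big_map -act_sum -scaler_sumr; apply.
- by apply: Dmap => M x /decomposition_submodule[_ Mact]; apply: Mact.
- by apply: Dmap => M x /decomposition_subspace; apply: subspaceZ.
- by rewrite /total !big_map -act_sum -scaler_sumr ws.
Qed.

Lemma expansion_weight h lam w s : expansion D w s ->
  weight_space act h lam w -> {in s, forall p, weight_space act h lam p.2}.
Proof.
move=> [Ds us _ <-] ws p ps; rewrite -(component_uniq us ps).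
exact: component_weight.
Qed.

End Decomposition.

Lemma span_coef n (b : 'I_n -> V) x :
  Defs.span (fun y => exists i, y = b i) x ->
  exists a : 'I_n -> K, x = \sum_l a l *: b l.
Proof.
case=> m [v [c [vb ->]]]; elim: m v c vb => [|m IHm] v c vb.
  by exists (fun _ => 0); rewrite big_ord0 big1 // => l _; rewrite scale0r.
rewrite big_ord_recr /=.
have [a ->] := IHm (v \o widen_ord (leqnSn m)) (c \o widen_ord (leqnSn m)) (fun i => vb _).
have [l0 ->] := vb ord_max.
exists (fun l => a l + (if l == l0 then c ord_max else 0)).
under [RHS]eq_bigr do rewrite scalerDl.
rewrite big_split /=; congr (_ + _).
rewrite (bigD1 l0) //= eqxx big1 ?addr0 // => l /negbTE ->.
by rewrite scale0r.
Qed.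

Lemma steinitz_leq n k (b : 'I_n -> V) (y : 'I_k -> V) :
  (forall i, Defs.span (fun z => exists l, z = b l) (y i)) ->
  (forall c : 'I_k -> K, \sum_i c i *: y i = 0 -> forall i, c i = 0) ->
  (k <= n)%N.
Proof.
move=> yb y_free.
have /fin_all_exists [a ya] i : exists a : 'I_n -> K, y i = \sum_l a l *: b l.
  exact: span_coef.
pose A : 'M[K]_(k, n) := \matrix_(i, l) a i l.
suff: row_free A by rewrite -row_leq_rank => /leq_trans; apply; apply: rank_leq_col.
apply: inj_row_free => c cA0; apply/rowP => i; rewrite mxE; apply: y_free => {i}.
transitivity (\sum_l (c *m A) 0 l *: b l); last first.
  by rewrite cA0 big1 // => l _; rewrite mxE scale0r.
under eq_bigr do rewrite ya scaler_sumr.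
rewrite exchange_big; apply: eq_bigr => l _; rewrite !mxE scaler_suml.
by apply: eq_bigr => i _; rewrite mxE scalerA.
Qed.

Lemma expansion_size_leq D h lam n (b : 'I_n -> V) w s : decomposition D ->
  (forall x, weight_space act h lam x <-> Defs.span (fun y => exists i, y = b i) x) ->
  weight_space act h lam w -> expansion D w s -> (size s <= n)%N.
Proof.
move=> dD lam_b ww ws; have [Ds us s_nz _] := ws.
pose t := in_tuple s; pose y i := (tnth t i).2.
have t_s i : tnth t i \in s by apply: mem_tnth.
apply: (@steinitz_leq _ _ b y) => [i | c cy0 j].
  by apply/lam_b; apply: (expansion_weight dD ws ww).
pose sc := [seq ((tnth t i).1, c i *: y i) | i <- enum 'I_(size s)].
have Dsc : labelled D sc.
  apply: labelled_map => i _ /=; have [Di si] := Ds _ (t_s i).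
  by split=> //; apply: subspaceZ (decomposition_subspace dD Di) si.
have usc : uniq (unzip1 sc).
  by rewrite /unzip1 -map_comp (eq_map (g := fst \o tnth t)) // map_comp map_tnth_enum.
have sc0 : total sc = 0 by rewrite /total big_map big_enum.
have /eqP := total_eq0_uniq dD Dsc usc sc0 (map_f _ (mem_enum _ j)).
by rewrite scaler_eq0 (negbTE (s_nz _ (t_s j))) orbF => /eqP.
Qed.

Lemma refined_by_refl D : refined_by D D.
Proof. by move=> N DN; exists N. Qed.

Lemma refined_by_trans D1 D2 D3 :
  refined_by D1 D2 -> refined_by D2 D3 -> refined_by D1 D3.
Proof.
move=> D12 D23 N /D23[M /D12[P DP MP] NM].
by exists P => // x /NM /MP.
Qed.

Lemma refinement_map D D' : refined_by D D' ->
  exists f : space -> space, forall N, D' N -> D (f N) /\ subset_of N (f N).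
Proof.
move=> DD'; have /choice[f fP] : forall N, exists M, D' N -> D M /\ subset_of N M.
  by move=> N; have [/DD'[M DM NM] | nD'N] := pselect (D' N); [exists M | exists N].
by exists f.
Qed.

(* Each coarse component of w is the sum of a nonempty set of fine components,
   these sets being disjoint; with no more fine components than coarse ones,
   each set is a singleton. *)
Lemma expansion_refined D D' w s t : decomposition D -> refined_by D D' ->
  expansion D w s -> expansion D' w t -> (size t <= size s)%N ->
  {in s, forall p, exists2 N', D' N' & N' p.2}.
Proof.
move=> dD DD' ws [D't _ _ tw] ts.
have [f fP] := refinement_map DD'.
pose t' := [seq (f r.1, r.2) | r <- t].
have Dt' : labelled D t'.
  apply: labelled_map => r /D't[D'r rr] /=; have [Dfr rf] := fP _ D'r.
  by split=> //; apply: rf.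
have t'w : total t' = w by rewrite /total big_map.
have p_t' p : p \in s -> p.2 = component t' p.1 by move/(expansion_entry dD ws Dt' t'w).
have keys_t' p : p \in s -> p.1 \in unzip1 t'.
  move=> ps; case: ws => _ _ s_nz _; apply: contraNT (s_nz p ps) => p_t'0.
  by rewrite p_t' // component_notin.
have ut' : uniq (unzip1 t').
  case: ws => _ us _ _; apply: leq_size_uniq us _ _.
    by move=> N /mapP[p ps ->]; apply: keys_t'.
  by rewrite !size_map.
move=> p ps; have /mapP[q /mapP[r rt ->] pr] := keys_t' p ps.
have [D'r rr] := D't r rt; exists r.1 => //.
by rewrite p_t' // pr (component_uniq ut' (map_f _ rt)).
Qed.

Section Chain.
Variable C : (space -> Prop) -> Prop.
Hypothesis C_decomposition : forall D, C D -> decomposition D.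
Hypothesis C_total : forall D D', C D -> C D' -> refined_by D D' \/ refined_by D' D.
Hypothesis C_nonempty : exists D, C D.

Definition pure (w : V) := forall D, C D -> exists2 M, D M & M w.

Definition hull (w : V) : space :=
  fun u => forall D, C D -> forall M, D M -> M w -> M u.

Definition limit (N : space) := exists w, [/\ pure w, w != 0 & N = hull w].

Definition separates (D : space -> Prop) (N1 N2 : space) :=
  ~ exists2 M, D M & subset_of N1 M /\ subset_of N2 M.

Lemma hull_self w : hull w w.
Proof. by []. Qed.

Lemma hull_submodule w : submodule act (hull w).
Proof.
split; first split.
- by move=> D CD M DM _; apply: subspace0 (decomposition_subspace (C_decomposition CD) DM).
- move=> a x y hx hy D CD M DM Mw.
  have [_ M_lin] := decomposition_subspace (C_decomposition CD) DM.
  by apply: M_lin; [apply: hx CD M DM Mw | apply: hy CD M DM Mw].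
- move=> x v hv D CD M DM Mw.
  have [_ M_act] := decomposition_submodule (C_decomposition CD) DM.
  by apply: M_act; apply: hv CD M DM Mw.
Qed.

Lemma limit_nonzero N : limit N -> nonzero_submodule N.
Proof.
case=> w [_ w_nz ->]; split; first exact: hull_submodule.
by exists w; split=> //; apply: hull_self.
Qed.

Lemma refined_by_limit D : C D -> refined_by D limit.
Proof.
move=> CD _ [w [w_pure _ ->]]; have [M DM Mw] := w_pure D CD.
by exists M => // u hu; apply: hu CD M DM Mw.
Qed.

Lemma chain_common (X : eqType) (r : seq X) (Q : X -> (space -> Prop) -> Prop) :
  (forall x D D', refined_by D D' -> Q x D -> Q x D') ->
  {in r, forall x, exists2 D, C D & Q x D} ->
  exists2 D, C D & {in r, forall x, Q x D}.
Proof.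
move=> Q_mono; elim: r => [|x r IHr] Qr; first by have [D CD] := C_nonempty; exists D.
have [D CD QD] : exists2 D, C D & {in r, forall y, Q y D}.
  by apply: IHr => y yr; apply: Qr; rewrite inE yr orbT.
have [Dx CDx Qx] := Qr x (mem_head _ _).
have [DDx | DxD] := C_total CD CDx.
- exists Dx => // y; rewrite inE => /predU1P[-> // | /QD]; exact: Q_mono.
- exists D => // y; rewrite inE => /predU1P[-> | /QD //]; exact: Q_mono Qx.
Qed.

Lemma separates_refined D D' N1 N2 :
  refined_by D D' -> separates D N1 N2 -> separates D' N1 N2.
Proof.
move=> DD' sepD [M' /DD'[M DM M'M] [N1M' N2M']]; apply: sepD.
by exists M => //; split=> x Nx; apply/M'M; [apply: N1M' | apply: N2M'].
Qed.

Lemma separates_not_subset N1 N2 :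
  limit N2 -> ~ subset_of N1 N2 -> exists2 D, C D & separates D N1 N2.
Proof.
case=> w [_ w_nz ->] /existsNP[u /not_implyP[N1u /existsNP[D]]].
move=> /not_implyP[CD /existsNP[M /not_implyP[DM /not_implyP[Mw Mu]]]].
exists D => // -[P DP [N1P hullP]].
have PM := piece_unique (C_decomposition CD) DP DM (hullP w (@hull_self w)) Mw w_nz.
by apply: Mu; rewrite -PM; apply: N1P.
Qed.

Lemma limit_separated N1 N2 : limit N1 -> limit N2 -> N1 <> N2 ->
  exists2 D, C D & separates D N1 N2.
Proof.
move=> LN1 LN2 N12.
have [N1N2 | ] := pselect (subset_of N1 N2); last exact: separates_not_subset.
have [N2N1 | /(separates_not_subset LN1)[D CD sepD]] := pselect (subset_of N2 N1).
  by case: N12; apply/predeqP => x; split; [apply: N1N2 | apply: N2N1].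
by exists D => // -[M DM [N1M N2M]]; apply: sepD; exists M.
Qed.

Lemma limit_independent s : labelled limit s -> total s = 0 ->
  forall N, component s N = 0.
Proof.
move=> Ls s0 N.
pose sep_pair (pq : (space * V) * (space * V)) D :=
  pq.1.1 <> pq.2.1 -> separates D pq.1.1 pq.2.1.
have [D CD Dsep] :
    exists2 D, C D & {in [seq (p, q) | p <- s, q <- s], forall pq, sep_pair pq D}.
  apply: chain_common => [pq D D' DD' sepD /sepD | _ /allpairsP[[p q] [/= ps qs ->]]].
    exact: separates_refined.
  have [pq | pq] := pselect (p.1 = q.1); first by have [D CD] := C_nonempty; exists D.
  have [D CD sepD] := limit_separated (proj1 (Ls p ps)) (proj1 (Ls q qs)) pq.
  by exists D.
have dD := C_decomposition CD; have [f fP] := refinement_map (refined_by_limit CD).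
have f_inj : {in unzip1 s &, injective f}.
  move=> _ _ /mapP[p ps ->] /mapP[q qs ->] fpq.
  have [// | pq] := pselect (p.1 = q.1); case: (Dsep _ (allpairs_f pair ps qs) pq).
  have [Dfp p_fp] := fP _ (proj1 (Ls p ps)); have [_ q_fq] := fP _ (proj1 (Ls q qs)).
  by exists (f p.1) => //; split=> //=; rewrite fpq.
have [Ns | Ns] := boolP (N \in unzip1 s); last exact: component_notin.
rewrite -(component_relabel f_inj Ns); case: dD => _ _; apply.
- apply: labelled_map => p /Ls[Lp pp] /=; have [Dfp pf] := fP _ Lp.
  by split=> //; apply: pf.
- by rewrite /total big_map.
Qed.

Lemma maximal_expansion_pure Ds w s : C Ds -> expansion Ds w s ->
  (forall D t, C D -> expansion D w t -> (size t <= size s)%N) ->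
  {in s, forall p, pure p.2}.
Proof.
move=> CDs ws s_max p ps D CD; have [DDs | DsD] := C_total CD CDs.
- case: ws => /(_ p ps)[/DDs[M DM pM] pp] _ _ _.
  by exists M => //; apply: pM.
- have [t wt] := exists_expansion (C_decomposition CD) w.
  exact: expansion_refined (C_decomposition CDs) DsD ws wt (s_max _ _ CD wt) _ ps.
Qed.

Lemma limit_weight_labelled h lam n (b : 'I_n -> V) w :
  (forall x, weight_space act h lam x <-> Defs.span (fun y => exists i, y = b i) x) ->
  weight_space act h lam w -> exists2 s, labelled limit s & w = total s.
Proof.
move=> lam_b ww.
pose sizes k := `[< exists D s, [/\ C D, expansion D w s & size s = k] >].
have sizes_le k : sizes k -> (k <= n)%N.
  move=> /asboolP[D [s [CD ws <-]]].
  exact: expansion_size_leq (C_decomposition CD) lam_b ww ws.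
have sizes_ex : exists k, sizes k.
  have [D CD] := C_nonempty; have [s ws] := exists_expansion (C_decomposition CD) w.
  by exists (size s); apply/asboolP; exists D, s.
case: (ex_maxnP sizes_ex sizes_le) => _ /asboolP[Ds [s [CDs ws <-]]] s_max.
have s_pure := maximal_expansion_pure CDs ws.
have [_ _ s_nz sw] := ws.
exists [seq (hull p.2, p.2) | p <- s]; last by rewrite /total big_map.
apply: labelled_map => p ps; split=> //; exists p.2; split=> //; last exact: s_nz.
by apply: s_pure => // D t CD wt; apply: s_max; apply/asboolP; exists D, t.
Qed.

End Chain.

Section Split.
Variables (D : space -> Prop) (N N1 N2 : space).
Hypotheses (dD : decomposition D) (DN : D N).
Hypotheses (N1_nz : nonzero_submodule N1) (N2_nz : nonzero_submodule N2).
Hypothesis N_N1N2 : direct_sum2 N N1 N2.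

Definition split_piece (M : space) := (D M /\ M <> N) \/ M = N1 \/ M = N2.

Lemma split_piece_neq M : split_piece M -> M <> N.
Proof.
have [N1N N2N _ N12_0] := N_N1N2.
have [_ [x1 [N1x1 x1_nz]]] := N1_nz; have [_ [x2 [N2x2 x2_nz]]] := N2_nz.
case=> [[_ //] | [-> | ->]] E.
- by move/eqP: x2_nz; apply; apply: N12_0 => //; rewrite E; apply: N2N.
- by move/eqP: x1_nz; apply; apply: N12_0 => //; rewrite E; apply: N1N.
Qed.

Lemma piece_neq_split M : D M -> M <> N -> M <> N1 /\ M <> N2.
Proof.
have [N1N N2N _ _] := N_N1N2.
have [_ [x1 [N1x1 x1_nz]]] := N1_nz; have [_ [x2 [N2x2 x2_nz]]] := N2_nz.
move=> DM MN; split=> E; apply: MN.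
- by apply: (piece_unique dD DM DN _ (N1N _ N1x1) x1_nz); rewrite E.
- by apply: (piece_unique dD DM DN _ (N2N _ N2x2) x2_nz); rewrite E.
Qed.

Lemma split_pieces_neq : N1 <> N2.
Proof.
have [_ _ _ N12_0] := N_N1N2; have [_ [x1 [N1x1 x1_nz]]] := N1_nz.
by move=> E; move/eqP: x1_nz; apply; apply: N12_0; rewrite -?E.
Qed.

Definition merge (M : space) := if (M == N1) || (M == N2) then N else M.

Lemma labelled_merge s : labelled split_piece s ->
  labelled D [seq (merge p.1, p.2) | p <- s].
Proof.
have [N1N N2N _ _] := N_N1N2; move=> Ss; apply: labelled_map => p ps /=.
rewrite /merge; have [[[Dp pN] | [E | E]] pp] := Ss p ps.
- by have [/eqP/negbTE -> /eqP/negbTE ->] := piece_neq_split Dp pN.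
- by rewrite E eqxx; split=> //; apply: N1N; rewrite -E.
- by rewrite E eqxx orbT; split=> //; apply: N2N; rewrite -E.
Qed.

Lemma split_component_sum s : labelled split_piece s ->
  \sum_(p <- s | merge p.1 == N) p.2 = component s N1 + component s N2.
Proof.
move=> Ss; transitivity (\sum_(p <- s | (p.1 == N1) || (p.1 == N2)) p.2).
  rewrite big_seq_cond [RHS]big_seq_cond; apply: eq_bigl => p.
  case: (boolP (p \in s)) => //= ps; rewrite /merge; case: ifP => [_ | _].
    by rewrite eqxx.
  by apply/eqP/(split_piece_neq (proj1 (Ss p ps))).
rewrite (bigID (fun p => p.1 == N1)) /=; congr (_ + _); apply: eq_bigl => p.
  by rewrite andb_idl // => ->.
have [-> | _] := eqVneq p.1 N2; last by rewrite orbF andbN.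
by rewrite orbT; apply/eqP/nesym/split_pieces_neq.
Qed.

Lemma split_piece_independent s : labelled split_piece s -> total s = 0 ->
  forall M, component s M = 0.
Proof.
have [_ _ _ N12_0] := N_N1N2; move=> Ss s0.
have merge0 M : \sum_(p <- s | merge p.1 == M) p.2 = 0.
  have [_ _ /(_ _ (labelled_merge Ss))] := dD.
  by move=> /(_ _ M); rewrite /component /total !big_map; apply.
have N1_sub := proj1 (proj1 N1_nz); have N2_sub := proj1 (proj1 N2_nz).
have sum0 := merge0 N; rewrite split_component_sum // in sum0.
have N1s0 : component s N1 = 0.
  apply: N12_0; first exact: component_in Ss N1_sub.
  rewrite -[component s N1]opprK (addr0_eq sum0).
  exact/(subspaceN N2_sub)/(component_in Ss N2_sub).
move=> M; have [-> // | MN1] := eqVneq M N1.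
have [-> | MN2] := eqVneq M N2; first by move: sum0; rewrite N1s0 add0r.
have [-> | MN] := eqVneq M N.
  apply: component_notin; apply/negP => /mapP[p ps pN].
  exact: split_piece_neq (proj1 (Ss p ps)) (esym pN).
rewrite -(merge0 M) /component big_seq_cond [RHS]big_seq_cond; apply: eq_bigl => p.
case: (boolP (p \in s)) => //= ps; rewrite /merge; case: ifP => // /orP[] /eqP ->.
  by rewrite !(eq_sym _ M) (negbTE MN1) (negbTE MN).
by rewrite !(eq_sym _ M) (negbTE MN2) (negbTE MN).
Qed.

Lemma split_piece_decomposition : decomposition split_piece.
Proof.
have [N1N N2N N_span _] := N_N1N2; split; last exact: split_piece_independent.
  by move=> M [[DM _] | [-> | ->]] //; case: dD => nzD _ _; apply: nzD.
move=> v; have [_ /(_ v)[s Ds ->] _] := dD.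
rewrite /total big_seq; apply: labelled_sum => p ps; have [Dp pp] := Ds p ps.
have [pN | pN] := pselect (p.1 = N).
  have Np : N p.2 by rewrite -pN.
  have [v1 [v2 [N1v1 N2v2 ->]]] := N_span p.2 Np.
  exists [:: (N1, v1); (N2, v2)]; last by rewrite /total !big_cons big_nil addr0.
  by move=> q; rewrite !inE => /orP[] /eqP -> /=; split=> //; right; [left | right].
exists [:: p]; last by rewrite /total big_seq1.
by move=> q; rewrite inE => /eqP -> ; split=> //; left.
Qed.

Lemma refined_by_split : refined_by D split_piece.
Proof.
have [N1N N2N _ _] := N_N1N2.
by move=> M [[DM _] | [-> | ->]]; [exists M | exists N | exists N].
Qed.

Lemma split_not_refined : ~ refined_by split_piece D.
Proof.
have [N1N N2N _ N12_0] := N_N1N2.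
have [_ [x1 [N1x1 x1_nz]]] := N1_nz; have [_ [x2 [N2x2 x2_nz]]] := N2_nz.
move=> /(_ N DN)[M [[DM MN] | [-> | ->]] NM].
- by apply: MN; apply: (piece_unique dD DM DN (NM _ (N1N _ N1x1)) (N1N _ N1x1) x1_nz).
- by move/eqP: x2_nz; apply; apply: N12_0 => //; apply/NM/N2N.
- by move/eqP: x1_nz; apply; apply: N12_0 => //; apply/NM/N1N.
Qed.

End Split.

Lemma maximal_decomposition_indecomposable D : decomposition D ->
  (forall D', decomposition D' -> refined_by D D' -> refined_by D' D) ->
  forall N, D N -> indecomposable act N.
Proof.
move=> dD D_max N DN; have [nzD _ _] := dD; have [N_sub N_nz] := nzD N DN.
split=> // -[N1 [N2 [N1_sub N2_sub N1_nz N2_nz N_N1N2]]].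
apply: (split_not_refined dD DN (conj N1_sub N1_nz) (conj N2_sub N2_nz) N_N1N2).
apply: D_max.
  exact: split_piece_decomposition.
exact: refined_by_split.
Qed.

Lemma decomposition_direct_sum D : decomposition D ->
  direct_sum_family (fun N : {N | D N} => sval N).
Proof.
move=> dD; have [_ D_span _] := dD; split=> [v | k f w f_inj Dw w0 j].
  have [s Ds ->] := D_span v; pose t := in_tuple s.
  have Dt j : D (tnth t j).1 /\ (tnth t j).1 (tnth t j).2 by apply/Ds/mem_tnth.
  exists (size s), (fun j => exist _ _ (Dt j).1), (fun j => (tnth t j).2).
  by split=> [j | ]; [apply: (Dt j).2 | rewrite /total big_tnth].
pose s := [seq (sval (f i), w i) | i <- enum 'I_k].
have Ds : labelled D s by apply: labelled_map => i _; split; [apply: svalP | apply: Dw].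
have us : uniq (unzip1 s).
  rewrite /unzip1 -map_comp map_inj_uniq ?enum_uniq // => i i' /= fii'.
  by apply/f_inj/(eq_sig_hprop (fun _ _ _ => Prop_irrelevance _ _)).
have s0 : total s = 0 by rewrite /total big_map big_enum.
by have := total_eq0_uniq dD Ds us s0 (map_f _ (mem_enum _ j)).
Qed.

Variable h : L -> Prop.
Hypothesis weight_span : forall v, Defs.span (fun w => exists lam,
  fin_dim (weight_space act h lam) /\ weight_space act h lam w) v.

Lemma limit_decomposition C : (forall D, C D -> decomposition D) ->
  (forall D D', C D -> C D' -> refined_by D D' \/ refined_by D' D) ->
  (exists D, C D) -> decomposition (limit C).
Proof.
move=> C_dec C_tot C_ne.
split; [exact: limit_nonzero | move=> v | exact: limit_independent].
have [m [u [c [u_wt ->]]]] := weight_span v.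
apply: labelled_sum => i _; have [lam [[k [b lam_b]] wu]] := u_wt i.
exact: (limit_weight_labelled C_dec C_tot C_ne lam_b (weight_spaceZ (c i) wu)).
Qed.

Definition whole (N : space) := N = (fun _ => True) /\ exists v : V, v != 0.

Lemma whole_decomposition : decomposition whole.
Proof.
split.
- by move=> N [-> [v v_nz]]; split; [split; first split | exists v].
- move=> v; have [[u u_nz] | V0] := pselect (exists u : V, u != 0).
    exists [:: (fun _ => True, v)]; last by rewrite /total big_seq1.
    by move=> p; rewrite inE => /eqP ->; split=> //; split=> //; exists u.
  exists [::] => [p | ]; rewrite ?in_nil // /total big_nil.
  by apply/eqP; apply: contra_notT V0 => v_nz; exists v.
- move=> s Ws s0 N; have [-> | NT] := eqVneq N (fun _ => True).
    rewrite -s0 /component /total big_seq_cond [RHS]big_seq_cond; apply: eq_bigl => p.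
    by case: (boolP (p \in s)) => //= /Ws[[-> _] _]; rewrite eqxx.
  apply: component_notin; apply/negP => /mapP[p /Ws[[E _] _] NE].
  by move/eqP: NT; apply; rewrite NE E.
Qed.

Lemma exists_maximal_decomposition : exists2 D, decomposition D &
  forall D', decomposition D' -> refined_by D D' -> refined_by D' D.
Proof.
pose T := {D : space -> Prop | decomposition D}.
pose R (D D' : T) := `[< refined_by (sval D) (sval D') >].
have [|||D D_max] := @ZL_preorder T (exist _ whole whole_decomposition) R.
- by move=> D; apply/asboolP/refined_by_refl.
- by move=> D1 D2 D3 /asboolP D12 /asboolP D23; apply/asboolP/(refined_by_trans D12 D23).
- move=> A A_tot; have [[D0 AD0] | A0] := pselect (exists D, A D); last first.
    by exists (exist _ whole whole_decomposition) => D AD; case: A0; exists D.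
  pose C D := exists2 D', A D' & sval D' = D.
  have C_dec D : C D -> decomposition D by case=> D' _ <-; apply: svalP.
  have C_tot D D' : C D -> C D' -> refined_by D D' \/ refined_by D' D.
    by move=> [E AE <-] [E' AE' <-]; case: (A_tot E E' AE AE') => /asboolP; [left | right].
  have C_ne : exists D, C D by exists (sval D0), D0.
  exists (exist _ (limit C) (limit_decomposition C_dec C_tot C_ne)) => D AD.
  by apply/asboolP/refined_by_limit; exists D.
exists (sval D); first exact: svalP.
by move=> D' dD' DD'; apply/asboolP/(D_max (exist _ D' dD')); apply/asboolP.
Qed.

Theorem weight_module_sum_indecomposable :
  exists (I : Type) (Ns : I -> V -> Prop),
    (forall i, indecomposable act (Ns i)) /\ direct_sum_family Ns.
Proof.
have [D dD D_max] := exists_maximal_decomposition.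
exists {N | D N}, sval; split; last exact: decomposition_direct_sum.
by case=> N DN; apply: maximal_decomposition_indecomposable dD D_max N DN.
Qed.

End ModuleDecompositions.

Theorem mainTheorem7 (K : closedFieldType) (L : lmodType K)
    (br : L -> L -> L) (gs Hs : nat -> L -> Prop) (h : L -> Prop)
    (P : (L -> K) -> Prop) :
  [pchar K]%R =i pred0 ->
  root_reductive br gs Hs ->
  splitting_max_toral br gs h ->
  positive_system br h P ->
  dynkin br h P ->
  forall (V : lmodType K) (act : L -> V -> V),
    lie_module br act -> in_Obar br act h P ->
    exists (I : Type) (Ns : I -> V -> Prop),
      (forall i, indecomposable act (Ns i)) /\ direct_sum_family Ns.
Proof.
move=> _ _ _ _ _ V act [_ act_linear _] [weight_span weight_fin _].
apply: (weight_module_sum_indecomposable act_linear (h := h)) => v.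
have [m [u [c [u_wt ->]]]] := weight_span v.
exists m, u, c; split=> // i; have [lam [lam_lin wu]] := u_wt i.
by exists lam; split=> //; apply: weight_fin.
Qed.
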